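(* Let $0<R<1$ and let $f$ be a circular tractrix with parameter $R$ and constants $c_1^2-c_2^2=1$. Then $f$ is closed, i.e. there exists $P>0$ with $f(t+P)=f(t)$ for all $t\in\mathbb R$, if and only if $\sqrt{1-R^2}\in\mathbb Q$.
   Context: Fix $0<R<1$, $\lambda=\frac{\sqrt{1-R^2}}{R}$, and real constants $c_1,c_2$ with $c_1^2-c_2^2=1$. The circular tractrix is $f(t)=\big(\xi_1\cos\tfrac tR+\xi_2\sin\tfrac tR,\ -\xi_2\cos\tfrac tR+\xi_1\sin\tfrac tR,\ \xi_3\big)$, $t\in\mathbb R$, with $\xi_1=\frac{(R-\frac1R)\cos\lambda t}{\frac{c_1}{R}+\cos\lambda t}$, $\xi_2=-\frac{\lambda\sin\lambda t}{\frac{c_1}{R}+\cos\lambda t}$, $\xi_3=\frac{\lambda c_2}{\frac{c_1}{R}+\cos\lambda t}$. *)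

From Stdlib Require Import Reals QArith Qreals.
Open Scope R_scope.

Definition lam (Rr : R) : R := sqrt (1 - Rr ^ 2) / Rr.

Definition xi1 (Rr c1 t : R) : R :=
  ((Rr - 1 / Rr) * cos (lam Rr * t)) / (c1 / Rr + cos (lam Rr * t)).
Definition xi2 (Rr c1 t : R) : R :=
  - (lam Rr * sin (lam Rr * t)) / (c1 / Rr + cos (lam Rr * t)).
Definition xi3 (Rr c1 c2 t : R) : R :=
  (lam Rr * c2) / (c1 / Rr + cos (lam Rr * t)).

Definition tractrix (Rr c1 c2 t : R) : R * R * R :=
  ( xi1 Rr c1 t * cos (t / Rr) + xi2 Rr c1 t * sin (t / Rr),
    - xi2 Rr c1 t * cos (t / Rr) + xi1 Rr c1 t * sin (t / Rr),
    xi3 Rr c1 c2 t ).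

From Stdlib Require Import Reals QArith Qreals Psatz.
Open Scope R_scope.

(* The planar part of the tractrix is the vector (xi1, -xi2), which depends on t only
   through lam t, rotated by the angle t / R.  If f(P) = f(0), comparing the heights xi3
   (or, when c2 = 0, the lengths of the planar parts, which the rotation preserves)
   forces cos (lam P) = 1; the planar vectors then coincide, so the rotation by P / R is
   trivial as well.  Hence P / R and lam P both lie in 2 pi Z, and sqrt (1 - R^2) =
   lam R = (lam P) / (P / R) is rational.  Conversely, if sqrt (1 - R^2) = n / d, then
   P = 2 pi d R makes both angles multiples of 2 pi. *)

Lemma cos_plus_2kPI (x : R) (k : Z) : cos (x + 2 * IZR k * PI) = cos x.
Proof.
  rewrite cos_plus, Rmult_assoc, cos_2a_sin, sin_2a.
  rewrite (sin_eq_0_1 (IZR k * PI)) by (exists k; reflexivity). ring.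
Qed.

Lemma sin_plus_2kPI (x : R) (k : Z) : sin (x + 2 * IZR k * PI) = sin x.
Proof.
  rewrite sin_plus, Rmult_assoc, cos_2a_sin, sin_2a.
  rewrite (sin_eq_0_1 (IZR k * PI)) by (exists k; reflexivity). ring.
Qed.

Lemma cos_eq_1_2kPI (x : R) : cos x = 1 -> exists k : Z, x = 2 * IZR k * PI.
Proof.
  intro Hx.
  assert (Hhalf : sin (x / 2) = 0).
  { replace x with (2 * (x / 2)) in Hx by field. rewrite cos_2a_sin in Hx. nra. }
  destruct (sin_eq_0_0 _ Hhalf) as [k Hk]. exists k. lra.
Qed.

Lemma sin_eq_0_of_cos_eq_1 (x : R) : cos x = 1 -> sin x = 0.
Proof. intro Hx. pose proof (sin2_cos2 x) as H. rewrite Hx in H. unfold Rsqr in H. nra. Qed.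

Lemma rotation_norm (x y a : R) :
  (x * cos a + y * sin a) ^ 2 + (- y * cos a + x * sin a) ^ 2 = x ^ 2 + y ^ 2.
Proof.
  pose proof (sin2_cos2 a) as H. unfold Rsqr in H.
  transitivity ((x ^ 2 + y ^ 2) * (sin a * sin a + cos a * cos a)); [ring|].
  rewrite H. ring.
Qed.

Lemma ratio_of_2kPI (x y : R) (n m : Z) :
  x = 2 * IZR n * PI -> y = 2 * IZR m * PI -> 0 < y -> exists q : Q, Q2R q = x / y.
Proof.
  intros Hx Hy Hy0. pose proof PI_RGT_0.
  assert (Hm : (0 < m)%Z) by (apply lt_0_IZR; nra).
  exists (n # Z.to_pos m). unfold Q2R; simpl. rewrite Z2Pos.id by exact Hm.
  rewrite Hx, Hy. field. split; [lra | apply not_0_IZR; lia].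
Qed.

Lemma tractrix_periodic (Rr c1 c2 P : R) (k n : Z) :
  Rr <> 0 -> P / Rr = 2 * IZR k * PI -> lam Rr * P = 2 * IZR n * PI ->
  forall t, tractrix Rr c1 c2 (t + P) = tractrix Rr c1 c2 t.
Proof.
  intros HR Hrot Hlam t. unfold tractrix, xi1, xi2, xi3.
  replace ((t + P) / Rr) with (t / Rr + P / Rr) by (field; exact HR).
  rewrite Rmult_plus_distr_l, Hrot, Hlam, !cos_plus_2kPI, !sin_plus_2kPI.
  reflexivity.
Qed.

Lemma norm_profile_eq_1 (r c v : R) :
  r <> 0 -> c ^ 2 = 1 -> c + r * v <> 0 -> c + r * 1 <> 0 ->
  (1 - r ^ 2 * v ^ 2) / (c + r * v) ^ 2 = (1 - r ^ 2 * 1 ^ 2) / (c + r * 1) ^ 2 -> v = 1.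
Proof.
  intros Hr Hc Hv H1 Heq.
  field_simplify_eq in Heq; [split; [contradict H1 | contradict Hv]; lra|].
  (* as c^2 = 1, 1 - r^2 x^2 = (c - r x)(c + r x): the equation is (c - r v)(c + r) = (c - r)(c + r v) *)
  assert (Hfac : (1 - v) * (2 * c * r * ((c + r * v) * (c + r))) = 0).
  { transitivity ((1 - r ^ 2 * v ^ 2) * (c + r) ^ 2 - (1 - r ^ 2) * (c + r * v) ^ 2
                  + (c ^ 2 - 1) * ((c + r) ^ 2 - (c + r * v) ^ 2)); [ring|].
    rewrite Hc. lra. }
  assert (Hc0 : c <> 0) by (intro Hz; rewrite Hz in Hc; lra).
  apply Rmult_integral in Hfac as [Hfac | Hfac]; [lra|].
  exfalso. revert Hfac. repeat apply Rmult_integral_contrapositive_currified; lra.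
Qed.

Section TractrixReturn.

Variables Rr c1 c2 : R.
Hypothesis HR0 : 0 < Rr.
Hypothesis HR1 : Rr < 1.
Hypothesis Hc : c1 ^ 2 - c2 ^ 2 = 1.

Local Notation w := (sqrt (1 - Rr ^ 2)).
Local Notation u t := (cos (lam Rr * t)).

Lemma w_sq : w ^ 2 = 1 - Rr ^ 2.
Proof. rewrite <- Rsqr_pow2. apply Rsqr_sqrt. nra. Qed.

Lemma w_pos : 0 < w.
Proof. apply sqrt_lt_R0. nra. Qed.

Lemma denom_neq0 (v : R) : -1 <= v <= 1 -> c1 + Rr * v <> 0.
Proof.
  intros Hv Hz. assert (Hc1 : c1 = - (Rr * v)) by lra.
  assert (v * v <= 1) by nra. assert (Rr * Rr < 1) by nra.
  rewrite Hc1 in Hc. nra.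
Qed.

Lemma denom_u_neq0 (t : R) : c1 + Rr * u t <> 0.
Proof. apply denom_neq0; apply COS_bound. Qed.

Lemma div_scaled_denom (a t : R) : a / (c1 / Rr + u t) = Rr * a / (c1 + Rr * u t).
Proof.
  assert (Hd : c1 + Rr * u t = Rr * (c1 / Rr + u t)) by (field; lra).
  pose proof (denom_u_neq0 t) as Hd0. rewrite Hd in Hd0 |- *.
  field. split; [|lra]. intro Hz. apply Hd0. rewrite Hz. ring.
Qed.

(* R - 1/R = -w^2/R and lam = w/R *)
Lemma xi1_eq (t : R) : xi1 Rr c1 t = - (w ^ 2 * u t) / (c1 + Rr * u t).
Proof. unfold xi1. rewrite div_scaled_denom, w_sq. field. split; [apply denom_u_neq0 | lra]. Qed.

Lemma xi2_eq (t : R) : xi2 Rr c1 t = - (w * sin (lam Rr * t)) / (c1 + Rr * u t).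
Proof. unfold xi2. rewrite div_scaled_denom. unfold lam. field. split; [apply denom_u_neq0 | lra]. Qed.

Lemma xi3_eq (t : R) : xi3 Rr c1 c2 t = w * c2 / (c1 + Rr * u t).
Proof. unfold xi3. rewrite div_scaled_denom. unfold lam. field. split; [apply denom_u_neq0 | lra]. Qed.

Lemma xi_norm (t : R) :
  xi1 Rr c1 t ^ 2 + xi2 Rr c1 t ^ 2 = w ^ 2 * ((1 - Rr ^ 2 * u t ^ 2) / (c1 + Rr * u t) ^ 2).
Proof.
  pose proof (denom_u_neq0 t).
  pose proof (sin2_cos2 (lam Rr * t)) as Hsc. unfold Rsqr in Hsc.
  rewrite xi1_eq, xi2_eq.
  transitivity (w ^ 2 * ((w ^ 2 * u t ^ 2 + sin (lam Rr * t) ^ 2) / (c1 + Rr * u t) ^ 2)).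
  - field. assumption.
  - do 2 f_equal. rewrite w_sq. nra.
Qed.

Lemma cos_lam_eq_1_of_return (P : R) :
  tractrix Rr c1 c2 P = tractrix Rr c1 c2 0 -> u P = 1.
Proof.
  intro E. unfold tractrix in E. injection E as E1 E2 E3.
  assert (Hu0 : u 0 = 1) by (rewrite Rmult_0_r; apply cos_0).
  pose proof (denom_u_neq0 P) as HdP.
  assert (Hd0 : c1 + Rr * 1 <> 0) by (rewrite <- Hu0; apply denom_u_neq0).
  destruct (Req_dec c2 0) as [Hc2 | Hc2].
  - assert (Hnorm : xi1 Rr c1 P ^ 2 + xi2 Rr c1 P ^ 2 = xi1 Rr c1 0 ^ 2 + xi2 Rr c1 0 ^ 2).
    { rewrite <- (rotation_norm _ _ (P / Rr)), <- (rotation_norm (xi1 Rr c1 0) _ (0 / Rr)), E1, E2.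
      reflexivity. }
    rewrite !xi_norm, Hu0 in Hnorm.
    apply Rmult_eq_reg_l in Hnorm; [|apply pow_nonzero; pose proof w_pos; lra].
    apply (norm_profile_eq_1 Rr c1); try lra.
    rewrite Hc2 in Hc. lra.
  - rewrite !xi3_eq, Hu0 in E3. unfold Rdiv in E3.
    apply Rmult_eq_reg_l in E3; [|apply Rmult_integral_contrapositive_currified; pose proof w_pos; lra].
    apply Rinv_eq_reg in E3. nra.
Qed.

Lemma cos_rot_eq_1_of_return (P : R) :
  tractrix Rr c1 c2 P = tractrix Rr c1 c2 0 -> cos (P / Rr) = 1.
Proof.
  intro E. pose proof (cos_lam_eq_1_of_return P E) as Hu.
  pose proof (sin_eq_0_of_cos_eq_1 _ Hu) as Hs.
  unfold tractrix in E. injection E as E1 _ _.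
  rewrite !xi1_eq, !xi2_eq, Hu, Hs, !Rmult_0_r, cos_0, sin_0, Rdiv_0_l, cos_0, sin_0 in E1.
  unfold Rdiv in E1. repeat rewrite ?Ropp_0, ?Rmult_0_l, ?Rmult_0_r in E1.
  set (a := - (w ^ 2 * 1) * / (c1 + Rr * 1)) in E1.
  assert (Ha : a <> 0).
  { apply Rmult_integral_contrapositive_currified.
    - pose proof w_pos. nra.
    - apply Rinv_neq_0_compat, denom_neq0. lra. }
  apply (Rmult_eq_reg_l a); [lra | exact Ha].
Qed.
End TractrixReturn.

Theorem mainTheorem13 (Rr c1 c2 : R) :
  0 < Rr -> Rr < 1 -> c1 ^ 2 - c2 ^ 2 = 1 ->
  ((exists P : R, 0 < P /\ forall t : R, tractrix Rr c1 c2 (t + P) = tractrix Rr c1 c2 t)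
   <-> exists q : Q, Q2R q = sqrt (1 - Rr ^ 2)).
Proof.
  intros HR0 HR1 Hc. split.
  - intros [P [HP Hper]].
    assert (Hret : tractrix Rr c1 c2 P = tractrix Rr c1 c2 0)
      by (rewrite <- (Rplus_0_l P) at 1; apply Hper).
    destruct (cos_eq_1_2kPI _ (cos_lam_eq_1_of_return Rr c1 c2 HR0 HR1 Hc P Hret)) as [n Hn].
    destruct (cos_eq_1_2kPI _ (cos_rot_eq_1_of_return Rr c1 c2 HR0 HR1 Hc P Hret)) as [k Hk].
    replace (sqrt (1 - Rr ^ 2)) with (lam Rr * P / (P / Rr)) by (unfold lam; field; lra).
    apply (ratio_of_2kPI _ _ n k Hn Hk), Rdiv_lt_0_compat; assumption.
  - intros [[n d] Hq]. unfold Q2R in Hq; cbn [Qnum Qden] in Hq.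
    pose proof PI_RGT_0. assert (Hd : 0 < IZR (Z.pos d)) by (apply IZR_lt; lia).
    exists (2 * IZR (Z.pos d) * PI * Rr). split.
    + apply Rmult_lt_0_compat; [nra | lra].
    + apply (tractrix_periodic Rr c1 c2 _ (Z.pos d) n); [lra | field; lra |].
      unfold lam. rewrite <- Hq. field. lra.
Qed.
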